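(* For every $n\ge3$, the toric ideal $I_{\mathbb{Z}_2,n}$ is generated by binomials of degree two.
   Context: For a finite abelian group $G$ (written additively) and integer $n\ge2$, $I_{G,n}$ denotes the kernel of the $\mathbb{C}$-algebra homomorphism $$\mathbb{C}[q_{g_1,\dots,g_n}: g_1,\dots,g_n\in G]\to\mathbb{C}[a^{(i)}_g: g\in G,\ i=1,\dots,n+1],\qquad q_{g_1,\dots,g_n}\mapsto a^{(1)}_{g_1}a^{(2)}_{g_2}\cdots a^{(n)}_{g_n}\,a^{(n+1)}_{g_1+\cdots+g_n}.$$ *)

From HB Require Import structures.
From mathcomp Require Import all_boot all_order all_algebra.
From mathcomp Require Import mpoly.
From mathcomp Require Import complex.
From mathcomp Require Import reals.
Set Implicit Arguments. Unset Strict Implicit. Unset Printing Implicit Defensive.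
Import Order.TTheory GRing.Theory Num.Theory.
Local Open Scope ring_scope.

Definition Cplx (R : realType) := complex R.

(* Index type of the variables q_{g_1,...,g_n}: tuples (g_1,...,g_n) in G^n. *)
Definition qidx (G : finZmodType) (n : nat) := {ffun 'I_n -> G}.
(* Index type of the variables a^{(i)}_g, i = 1..n+1 (encoded as 'I_n.+1), g in G. *)
Definition aidx (G : finZmodType) (n : nat) := ('I_n.+1 * G)%type.

Definition qring (R : realType) (G : finZmodType) (n : nat) :=
  {mpoly (Cplx R)[#|{: qidx G n}|]}.
Definition aring (R : realType) (G : finZmodType) (n : nat) :=
  {mpoly (Cplx R)[#|{: aidx G n}|]}.

Definition avar (R : realType) (G : finZmodType) (n : nat) (i : 'I_n.+1) (g : G)
  : aring R G n := 'X_(enum_rank ((i, g) : aidx G n)).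

(* Image of q_{g_1..g_n}: a^{(1)}_{g_1} ... a^{(n)}_{g_n} a^{(n+1)}_{g_1+...+g_n}.
   Index i : 'I_n corresponds to superscript i+1; ord_max to superscript n+1. *)
Definition qimage (R : realType) (G : finZmodType) (n : nat) (g : qidx G n)
  : aring R G n :=
  (\prod_(i < n) avar R (widen_ord (leqnSn n) i) (g i))
    * avar R ord_max (\sum_(i < n) g i).

Definition toric_map (R : realType) (G : finZmodType) (n : nat) (p : qring R G n)
  : aring R G n :=
  p \mPo [tuple qimage R (enum_val j) | j < #|{: qidx G n}|].

Definition in_toric_ideal (R : realType) (G : finZmodType) (n : nat) (p : qring R G n)
  : Prop := toric_map p = 0.

Definition deg2_binomial (R : realType) (G : finZmodType) (n : nat) (b : qring R G n)
  : Prop :=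
  exists (u v : 'X_{1.. #|{: qidx G n}|}),
    mdeg u = 2%N /\ mdeg v = 2%N /\ b = 'X_[u] - 'X_[v].

Definition toric_ideal_generated_by_deg2_binomials
  (R : realType) (G : finZmodType) (n : nat) : Prop :=
  exists B : seq (qring R G n),
    (forall b, b \in B -> deg2_binomial b /\ in_toric_ideal b) /\
    (forall p : qring R G n, in_toric_ideal p ->
       exists c : seq (qring R G n), size c = size B /\
         p = \sum_(i < size B) c`_i * B`_i).

From HB Require Import structures.
From mathcomp Require Import all_boot all_order all_algebra.
From mathcomp Require Import mpoly complex reals zify.
Set Implicit Arguments. Unset Strict Implicit. Unset Printing Implicit Defensive.
Import Order.TTheory GRing.Theory Num.Theory.
Local Open Scope ring_scope.

(* Monomials in the q-variables are multisets of points of ('Z_2)^n, and the image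
   of a monomial only records, for each of the n+1 coordinates of the extended
   tuples (g_1, ..., g_n, g_1 + ... + g_n), how many points take each value there.
   The kernel of such a monomial map is spanned by the binomials of its fibers, so
   it suffices to connect any two monomials with the same image by degree-two moves.
   Pick g in the first and v in the second; if g <> v their extended tuples differ in
   an even number >= 2 of coordinates. Double counting shows that some point h of one
   of the monomials agrees with the other endpoint in two coordinates i, k where g and
   v differ; replacing {g, h} by the pair obtained by flipping both at i and k is a
   degree-two move with the same image that brings g closer to v. Once both
   monomials contain the same point, cancel it and induct on the degree. *)

Section IdealOfSeq.
Variables (T : comNzRingType) (B : seq T).

Definition in_ideal (p : T) : Prop :=
  exists c : 'I_(size B) -> T, p = \sum_i c i * B`_i.

Lemma in_ideal0 : in_ideal 0.
Proof. by exists (fun _ => 0); rewrite big1 // => i _; rewrite mul0r. Qed.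

Lemma in_idealD p q : in_ideal p -> in_ideal q -> in_ideal (p + q).
Proof.
move=> [c ->] [d ->]; exists (fun i => c i + d i).
by rewrite -big_split; apply: eq_bigr => i _; rewrite mulrDl.
Qed.

Lemma in_idealMl q p : in_ideal p -> in_ideal (q * p).
Proof.
move=> [c ->]; exists (fun i => q * c i).
by rewrite mulr_sumr; apply: eq_bigr => i _; rewrite mulrA.
Qed.

Lemma in_idealN p : in_ideal p -> in_ideal (- p).
Proof. by rewrite -mulN1r; apply: in_idealMl. Qed.

Lemma in_ideal_sum (I : Type) (r : seq I) (F : I -> T) :
  (forall i, in_ideal (F i)) -> in_ideal (\sum_(i <- r) F i).
Proof. by move=> IF; apply: (big_ind in_ideal) => //; [apply: in_ideal0 | apply: in_idealD]. Qed.

Lemma mem_in_ideal b : b \in B -> in_ideal b.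
Proof.
move=> bB; have iB : (index b B < size B)%N by rewrite index_mem.
exists (fun i => (i == Ordinal iB)%:R).
rewrite (bigD1 (Ordinal iB)) //= eqxx mul1r nth_index // big1 ?addr0 // => i /negbTE ->.
by rewrite mul0r.
Qed.

End IdealOfSeq.

Section MonomialMapKernel.
Variables (F : comNzRingType) (k l : nat) (e : 'X_{1..k} -> 'X_{1..l}).
Variable B : seq {mpoly F[k]}.
Hypothesis in_ideal_fiber_binomial :
  forall m m', e m = e m' -> in_ideal B ('X_[m] - 'X_[m']).

Let fiber_rep m : 'X_{1..k} := xchoose (ex_intro (fun m' => e m' == e m) m (eqxx _)).

Let e_fiber_rep m : e (fiber_rep m) = e m.
Proof. exact/eqP/(xchooseP (ex_intro (fun m' => e m' == e m) m (eqxx _))). Qed.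

Let fiber_rep_eq m m' : (fiber_rep m == fiber_rep m') = (e m == e m').
Proof.
apply/eqP/eqP => [eq_r | eq_e]; first by rewrite -e_fiber_rep eq_r e_fiber_rep.
by apply: eq_xchoose => w; rewrite eq_e.
Qed.

(* [p - r] is a combination of fiber binomials, while the coefficients of [r] are
   those of [p] summed over fibers, i.e. the coefficients of the image of [p]. *)
Lemma in_ideal_monomial_map_kernel (p : {mpoly F[k]}) :
  \sum_(m <- msupp p) p@_m *: ('X_[e m] : {mpoly F[l]}) = 0 -> in_ideal B p.
Proof.
move=> ker_p; set r := \sum_(m <- msupp p) p@_m *: ('X_[fiber_rep m] : {mpoly F[k]}).
have -> : p = (p - r) + r by rewrite subrK.
apply: in_idealD.
  rewrite {1}(mpolyE p) /r -sumrB; apply: in_ideal_sum => m.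
  by rewrite -scalerBr -mul_mpolyC; apply/in_idealMl/in_ideal_fiber_binomial.
suff -> : r = 0 by apply: in_ideal0.
apply/mpolyP => w; rewrite mcoeff0 /r raddf_sum /=.
under eq_bigr => m _ do rewrite mcoeffZ mcoeffX.
have [/hasP[m0 _ /eqP <-] | no_w] := boolP (has (fun m => fiber_rep m == w) (msupp p)).
  under eq_bigr => m _ do rewrite fiber_rep_eq.
  have := congr1 (mcoeff (e m0)) ker_p; rewrite mcoeff0 raddf_sum /= => coef0.
  by apply: etrans coef0; apply: eq_bigr => m _; rewrite mcoeffZ mcoeffX.
rewrite big_seq big1 // => m m_p.
by move/hasPn: no_w => /(_ m m_p) /negbTE ->; rewrite mulr0.
Qed.

End MonomialMapKernel.

Section ToricExponents.
Variables (G : finZmodType) (n : nat).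
Local Notation K := #|{: qidx G n}|.
Local Notation Ka := #|{: aidx G n}|.

(* [qext g] is (g_1, ..., g_n, g_1 + ... + g_n), the superscript n+1 being [ord_max]. *)
Definition qext (g : qidx G n) (x : 'I_n.+1) : G :=
  if unlift ord_max x is Some j then g j else \sum_i g i.

Lemma lift_max_widen (j : 'I_n) : lift ord_max j = widen_ord (leqnSn n) j.
Proof. by apply/val_inj; rewrite [LHS]lift_max. Qed.

Lemma qext_widen g (j : 'I_n) : qext g (widen_ord (leqnSn n) j) = g j.
Proof. by rewrite -lift_max_widen /qext liftK. Qed.

Lemma qext_max g : qext g ord_max = \sum_i g i.
Proof. by rewrite /qext unlift_none. Qed.

Definition qimage_exp (g : qidx G n) : 'X_{1..Ka} :=
  (\sum_x U_(enum_rank ((x, qext g x) : aidx G n)))%MM.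

Lemma qimageE (R : realType) g : qimage R g = 'X_[qimage_exp g].
Proof.
rewrite /qimage /qimage_exp -(mprodXnE _ _ xpredT (fun _ => 1%N)).
rewrite big_ord_recr /= qext_max expr1; congr (_ * _).
by apply: eq_bigr => i _; rewrite expr1 qext_widen.
Qed.

Definition qcoord (j : 'I_K) : 'I_n.+1 -> G := qext (enum_val j).

Definition toric_exp (m : 'X_{1..K}) : 'X_{1..Ka} :=
  (\sum_j qimage_exp (enum_val j) *+ m j)%MM.

Lemma toric_mapX (R : realType) m : toric_map ('X_[m] : qring R G n) = 'X_[toric_exp m].
Proof.
rewrite /toric_map comp_mpolyX /toric_exp -mprodXnE.
by apply: eq_bigr => j _; rewrite tnth_mktuple qimageE.
Qed.

Lemma toric_mapE (R : realType) (p : qring R G n) :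
  toric_map p = \sum_(m <- msupp p) p@_m *: 'X_[toric_exp m].
Proof. by rewrite /toric_map comp_mpolyEX; apply: eq_bigr => m _; rewrite -toric_mapX. Qed.

Lemma toric_mapB (R : realType) (p q : qring R G n) :
  toric_map (p - q) = toric_map p - toric_map q.
Proof. exact: comp_mpolyB. Qed.

Definition coord_count (m : 'X_{1..K}) (x : 'I_n.+1) (c : G) : nat :=
  (\sum_j m j * (qcoord j x == c))%N.

Lemma toric_expE m x c : toric_exp m (enum_rank ((x, c) : aidx G n)) = coord_count m x c.
Proof.
rewrite /toric_exp mnm_sumE; apply: eq_bigr => j _.
rewrite mulmnE mulnC /qimage_exp mnm_sumE (bigD1 x) //= mnm1E big1 ?addn0.
  by rewrite (inj_eq enum_rank_inj) xpair_eqE eqxx.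
by move=> y /negbTE y_x; rewrite mnm1E (inj_eq enum_rank_inj) xpair_eqE y_x.
Qed.

Lemma toric_exp_eqP m m' :
  toric_exp m = toric_exp m' <-> forall x c, coord_count m x c = coord_count m' x c.
Proof.
split=> [eq_m x c | eq_c]; first by rewrite -!toric_expE eq_m.
by apply/mnmP => r; rewrite -(enum_valK r); case: (enum_val r) => x c; rewrite !toric_expE.
Qed.

Lemma coord_countD m1 m2 x c :
  coord_count (m1 + m2)%MM x c = (coord_count m1 x c + coord_count m2 x c)%N.
Proof. by rewrite -big_split; apply: eq_bigr => j _; rewrite mnmDE mulnDl. Qed.

Lemma coord_countU j x c : coord_count U_(j)%MM x c = (qcoord j x == c).
Proof.
rewrite /coord_count (bigD1 j) //= mnm1E eqxx mul1n big1 ?addn0 // => i i_j.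
by rewrite mnm1E eq_sym (negbTE i_j).
Qed.

Lemma toric_expD m1 m2 : toric_exp (m1 + m2)%MM = (toric_exp m1 + toric_exp m2)%MM.
Proof.
apply/mnmP => r; rewrite mnmDE -(enum_valK r); case: (enum_val r) => x c.
by rewrite !toric_expE coord_countD.
Qed.

Lemma mdeg_coord_count m x : mdeg m = (\sum_c coord_count m x c)%N.
Proof.
rewrite mdegE exchange_big; apply: eq_bigr => j _.
rewrite -big_distrr /= (bigD1 (qcoord j x)) //= eqxx big1 ?addn0 ?muln1 // => c.
by rewrite eq_sym => /negbTE ->.
Qed.

Lemma toric_exp_mdeg m m' : toric_exp m = toric_exp m' -> mdeg m = mdeg m'.
Proof. by move/toric_exp_eqP => eq_c; rewrite !(mdeg_coord_count _ ord0); apply: eq_bigr. Qed.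

End ToricExponents.

Lemma Z2_cases (a : 'Z_2) : a = 0 \/ a = 1.
Proof. by case: a => [[|[|//]] i]; [left | right]; apply: val_inj. Qed.

Lemma Z2_addrr (a : 'Z_2) : a + a = 0.
Proof. by case: (Z2_cases a) => ->; apply/eqP. Qed.

Lemma Z2_oppr (a : 'Z_2) : - a = a.
Proof. by apply/eqP; rewrite eq_sym -subr_eq0 opprK Z2_addrr. Qed.

Lemma Z2_neq_addr1 (a b : 'Z_2) : a != b -> b = a + 1.
Proof. by case: (Z2_cases a) => ->; case: (Z2_cases b) => -> // _; apply/eqP. Qed.

Lemma Z2_eq_one_of (a b c : 'Z_2) : a != b -> ((c == a) + (c == b) = 1)%N.
Proof. by move/Z2_neq_addr1 ->; case: (Z2_cases a) => ->; case: (Z2_cases c) => ->. Qed.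

Lemma Z2_natr_neq (a b : 'Z_2) : (a != b)%:R = a - b.
Proof. by case: (Z2_cases a) => ->; case: (Z2_cases b) => ->; apply/eqP. Qed.

Lemma Z2_natr_eq0 k : ((k%:R : 'Z_2) == 0) = ~~ odd k.
Proof. by rewrite Zp_nat -val_eqE /= modn2; case: odd. Qed.

Section Z2Distance.
Variable n : nat.
Local Notation K := #|{: qidx 'Z_2 n}|.
Local Notation widen := (widen_ord (leqnSn n)).
Local Notation qcoord := (@qcoord 'Z_2 n).

Lemma sum_qext (g : qidx 'Z_2 n) : \sum_x qext g x = 0.
Proof.
rewrite big_ord_recr /= qext_max.
by under eq_bigr => j _ do rewrite qext_widen; apply: Z2_addrr.
Qed.

(* Realizes adding 1 at the coordinates [i] and [k] of [qext g] ([qext_flip]); the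
   result is again an extended tuple because the total change 1 + 1 is 0 in 'Z_2. *)
Definition qflip (g : qidx 'Z_2 n) (i k : 'I_n.+1) : qidx 'Z_2 n :=
  [ffun j => g j + ((widen j == i)%:R + (widen j == k)%:R)].

Lemma sum_widen_eq (i : 'I_n.+1) :
  \sum_(j < n) ((widen j == i)%:R : 'Z_2) = 1 + (ord_max == i)%:R.
Proof.
have : \sum_(x < n.+1) ((x == i)%:R : 'Z_2) = 1.
  by rewrite (bigD1 i) //= eqxx big1 ?addr0 // => x /negbTE ->.
by rewrite big_ord_recr /= => /(canRL (addrK _)); rewrite Z2_oppr.
Qed.

Lemma qext_flip g i k x :
  qext (qflip g i k) x = qext g x + ((x == i)%:R + (x == k)%:R).
Proof.
case: (unliftP ord_max x) => [j ->|->]; first by rewrite /qext liftK ffunE lift_max_widen.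
rewrite !qext_max; under eq_bigr => j _ do rewrite ffunE.
by rewrite !big_split /= !sum_widen_eq addrACA Z2_addrr add0r.
Qed.

Definition qdist (g v : 'I_K) : nat := (\sum_x (qcoord g x != qcoord v x))%N.

Definition qagree (g v h : 'I_K) : nat :=
  (\sum_x ((qcoord g x != qcoord v x) && (qcoord h x == qcoord v x)))%N.

Lemma qdistC g v : qdist g v = qdist v g.
Proof. by apply: eq_bigr => x _; rewrite eq_sym. Qed.

Lemma qagree_self g v : qagree g v g = 0%N.
Proof. by apply: big1 => x _; case: eqP. Qed.

Lemma qagree_add g v h : (qagree g v h + qagree v g h)%N = qdist g v.
Proof.
rewrite -big_split; apply: eq_bigr => x _ /=.
rewrite [qcoord v x == _]eq_sym; case: eqP => //= /eqP g_v.
by rewrite addnC Z2_eq_one_of.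
Qed.

Lemma qcoord_inj g v : qcoord g =1 qcoord v -> g = v.
Proof.
move=> eq_gv; apply/enum_val_inj/ffunP => j.
by rewrite -!(qext_widen _ j); apply: eq_gv.
Qed.

(* Both extended tuples have coordinate sum 0, so they differ in an even number of places. *)
Lemma qdist_even g v : ~~ odd (qdist g v).
Proof.
rewrite -Z2_natr_eq0 /qdist natr_sum.
by under eq_bigr => x _ do rewrite Z2_natr_neq; rewrite sumrB !sum_qext subr0.
Qed.

Lemma qdist_ge2 g v : g != v -> (2 <= qdist g v)%N.
Proof.
move=> g_v; have [x gx_vx] : exists x, qcoord g x != qcoord v x.
  apply/existsP; apply: contraR g_v => /existsPn eq_gv.
  by apply/eqP/qcoord_inj => x; apply/eqP; rewrite -[_ == _]negbK eq_gv.
have : (0 < qdist g v)%N by rewrite /qdist (bigD1 x) //= gx_vx.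
by have := qdist_even g v; case: (qdist g v) => [|[|]].
Qed.

End Z2Distance.

Lemma sum_bool_gt1 (I : finType) (P : pred I) :
  (1 < \sum_x P x)%N -> exists x y, [/\ P x, P y & x != y].
Proof.
have -> : (\sum_x P x)%N = #|P|.
  by rewrite -sum1_card [RHS]big_mkcond; apply: eq_bigr => x _; rewrite unfold_in; case: (P x).
by case/card_gt1P => x [y [Px Py x_y]]; exists x, y.
Qed.

Lemma mnm_split k (m : 'X_{1..k}) a : (0 < m a)%N -> m = (U_(a) + (m - U_(a)))%MM.
Proof.
move=> m_a; apply/mnmP => j; rewrite mnmDE mnmBE mnm1E.
by case: eqP => [<- | _]; rewrite ?subnKC ?subn0.
Qed.

Lemma mnm_supp k (m : 'X_{1..k}) : m != 0%MM -> exists a, (0 < m a)%N.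
Proof.
rewrite -mdeg_eq0 mdegE sum_nat_eq0 => /forallPn[a /=]; rewrite -lt0n.
by exists a.
Qed.

Section QuadraticMoves.
Variables (R : realType) (n : nat).
Local Notation K := #|{: qidx 'Z_2 n}|.
Local Notation qcoord := (@qcoord 'Z_2 n).
Local Notation toric_exp := (@toric_exp 'Z_2 n).
Local Notation coord_count := (@coord_count 'Z_2 n).
Local Notation qdist := (@qdist n).
Local Notation qagree := (@qagree n).

Definition deg2_kernel_binomials : seq (qring R 'Z_2 n) :=
  [seq 'X_[U_(t.1.1.1) + U_(t.1.1.2)] - 'X_[U_(t.1.2) + U_(t.2)]
  | t <- enum {: 'I_K * 'I_K * 'I_K * 'I_K}
  & toric_exp (U_(t.1.1.1) + U_(t.1.1.2))%MM == toric_exp (U_(t.1.2) + U_(t.2))%MM].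

Definition quad_equiv (m m' : 'X_{1..K}) : Prop :=
  in_ideal deg2_kernel_binomials ('X_[m] - 'X_[m']).

Lemma quad_equiv_refl m : quad_equiv m m.
Proof. by rewrite /quad_equiv subrr; apply: in_ideal0. Qed.

Lemma quad_equiv_sym m m' : quad_equiv m m' -> quad_equiv m' m.
Proof. by move=> e; rewrite /quad_equiv -opprB; apply: in_idealN. Qed.

Lemma quad_equiv_trans m1 m2 m3 : quad_equiv m1 m2 -> quad_equiv m2 m3 -> quad_equiv m1 m3.
Proof. by move=> e12 e23; have := in_idealD e12 e23; rewrite addrA subrK. Qed.

Lemma quad_equivDl e m m' : quad_equiv m m' -> quad_equiv (e + m)%MM (e + m')%MM.
Proof. by rewrite /quad_equiv !mpolyXD -mulrBr; apply: in_idealMl. Qed.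

Lemma quad_equiv_pair a b c d :
  toric_exp (U_(a) + U_(b))%MM = toric_exp (U_(c) + U_(d))%MM ->
  quad_equiv (U_(a) + U_(b))%MM (U_(c) + U_(d))%MM.
Proof.
move=> eq_e; apply/mem_in_ideal/mapP; exists (a, b, c, d) => //.
by rewrite mem_filter /= eq_e eqxx mem_enum.
Qed.

Definition qflip_idx (g : 'I_K) (i k : 'I_n.+1) : 'I_K := enum_rank (qflip (enum_val g) i k).

Lemma qcoord_flip g i k x : i != k ->
  qcoord (qflip_idx g i k) x = qcoord g x + ((x == i) || (x == k))%:R.
Proof.
rewrite /qcoord /qflip_idx enum_rankK qext_flip => i_k; congr (_ + _).
by case: (eqVneq x i) => [-> | _]; rewrite ?(negbTE i_k) /= ?addr0 ?add0r.
Qed.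

(* Flipping [g] and [h] at two coordinates where they differ swaps their values there. *)
Lemma toric_exp_flip_pair g h i k : i != k ->
  qcoord g i != qcoord h i -> qcoord g k != qcoord h k ->
  toric_exp (U_(g) + U_(h))%MM = toric_exp (U_(qflip_idx g i k) + U_(qflip_idx h i k))%MM.
Proof.
move=> i_k gh_i gh_k; apply/toric_exp_eqP => x c.
rewrite !coord_countD !coord_countU !qcoord_flip //.
have [/orP x_ik | _] := boolP ((x == i) || (x == k)); last by rewrite !addr0.
have /Z2_neq_addr1 -> : qcoord g x != qcoord h x by case: x_ik => /eqP ->.
by rewrite -addrA Z2_addrr addr0 addnC.
Qed.

Lemma quad_move (m : 'X_{1..K}) g v h : (0 < m g)%N -> (0 < m h)%N -> (2 <= qagree g v h)%N ->
  exists m1 g1, [/\ quad_equiv m m1, toric_exp m1 = toric_exp m,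
                    (0 < m1 g1)%N & (qdist g1 v < qdist g v)%N].
Proof.
move=> m_g m_h agree2.
have [i [k [/andP[gv_i hv_i] /andP[gv_k hv_k] i_k]]] := sum_bool_gt1 agree2.
have g_h : g != h by apply: contraTneq agree2 => <-; rewrite qagree_self.
have gh_i : qcoord g i != qcoord h i by rewrite (eqP hv_i).
have gh_k : qcoord g k != qcoord h k by rewrite (eqP hv_k).
have def_m : m = (m - U_(g) - U_(h) + (U_(g) + U_(h)))%MM.
  have m_h' : (0 < (m - U_(g))%MM h)%N by rewrite mnmBE mnm1E (negbTE g_h) subn0.
  by rewrite addmC -addmA -mnm_split // -mnm_split.
exists (m - U_(g) - U_(h) + (U_(qflip_idx g i k) + U_(qflip_idx h i k)))%MM.
exists (qflip_idx g i k); split.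
- by rewrite {1}def_m; apply/quad_equivDl/quad_equiv_pair/toric_exp_flip_pair.
- by rewrite [in RHS]def_m [in RHS]toric_expD (toric_exp_flip_pair i_k gh_i gh_k) -toric_expD.
- by rewrite !mnmDE mnm1E eqxx addnCA.
rewrite /qdist (bigD1 i) //= [X in (_ < X)%N](bigD1 i) //= gv_i add1n ltnS.
rewrite qcoord_flip // eqxx -(Z2_neq_addr1 gv_i) eqxx add0n.
apply: leq_sum => x _; rewrite qcoord_flip //.
have [/orP x_ik | _] := boolP ((x == i) || (x == k)); last by rewrite addr0.
have /Z2_neq_addr1 <- : qcoord g x != qcoord v x by case: x_ik => /eqP ->.
by rewrite eqxx.
Qed.

Lemma sum_mul_qagree (m : 'X_{1..K}) g v :
  (\sum_h m h * qagree g v h)%N =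
  (\sum_x (qcoord g x != qcoord v x) * coord_count m x (qcoord v x))%N.
Proof.
under eq_bigr => h _ do rewrite big_distrr.
rewrite exchange_big; apply: eq_bigr => x _ /=.
rewrite big_distrr; apply: eq_bigr => h _ /=.
by case: (qcoord g x != qcoord v x); rewrite ?mul1n ?mul0n ?muln0.
Qed.

(* Double counting: [\sum_h m h * qagree g v h] is determined by the image, and it
   is at most [mdeg m - m g] if no move applies in [m], whereas it is at least
   [mdeg m'] if no move applies in [m'], because [qdist g v >= 2]. *)
Lemma quad_move_exists (m m' : 'X_{1..K}) g v :
  toric_exp m = toric_exp m' -> (0 < m g)%N -> (0 < m' v)%N -> g != v ->
  (exists2 h, (0 < m h)%N & (2 <= qagree g v h)%N) \/
  (exists2 h, (0 < m' h)%N & (2 <= qagree v g h)%N).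
Proof.
move=> eq_e m_g m'_v g_v.
have [/existsP[h /andP[m_h agree2]] | /existsPn no_move] :=
  boolP [exists h, (0 < m h)%N && (2 <= qagree g v h)%N]; first by left; exists h.
have [/existsP[h /andP[m'_h agree2]] | /existsPn no_move'] :=
  boolP [exists h, (0 < m' h)%N && (2 <= qagree v g h)%N]; first by right; exists h.
have upper : (\sum_h m h * qagree g v h + m g <= mdeg m)%N.
  rewrite mdegE [X in (_ <= X)%N](bigD1 g) // [X in (X + _ <= _)%N](bigD1 g) //=.
  rewrite qagree_self muln0 add0n addnC leq_add2l; apply: leq_sum => h _.
  have [-> // | m_h] := posnP (m h).
  have agree_le1 : (qagree g v h <= 1)%N by move: (no_move h); rewrite m_h -ltnNge.
  by rewrite -[leqRHS]muln1 leq_mul2l agree_le1 orbT.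
have lower : (mdeg m' <= \sum_h m' h * qagree g v h)%N.
  rewrite mdegE; apply: leq_sum => h _.
  have [-> // | m'_h] := posnP (m' h).
  have agree_le1 : (qagree v g h <= 1)%N by move: (no_move' h); rewrite m'_h -ltnNge.
  rewrite -[leqLHS]muln1 leq_mul2l.
  by have := qagree_add g v h; have := qdist_ge2 g_v; lia.
move: upper; rewrite sum_mul_qagree.
under eq_bigr => x _ do rewrite (proj1 (toric_exp_eqP _ _) eq_e).
rewrite -sum_mul_qagree (toric_exp_mdeg eq_e) => upper.
by have := leq_trans (leq_add lower (leqnn (m g))) upper; lia.
Qed.

Lemma quad_equiv_common_factor (m m' : 'X_{1..K}) g v :
  toric_exp m = toric_exp m' -> (0 < m g)%N -> (0 < m' v)%N ->
  exists h r r', [/\ quad_equiv m (U_(h) + r)%MM, quad_equiv m' (U_(h) + r')%MM,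
                    toric_exp (U_(h) + r)%MM = toric_exp m & toric_exp r = toric_exp r'].
Proof.
move def_d: (qdist g v) => d.
elim/ltn_ind: d m m' g v def_d => d IH m m' g v def_d eq_e m_g m'_v.
have [eq_gv | g_v] := eqVneq g v.
  rewrite -eq_gv in m'_v; exists g, (m - U_(g))%MM, (m' - U_(g))%MM.
  rewrite -!mnm_split //; split=> //; try exact: quad_equiv_refl.
  by have := eq_e; rewrite {1}(mnm_split m_g) {1}(mnm_split m'_v) !toric_expD => /addmI.
case: (quad_move_exists eq_e m_g m'_v g_v) => [[h m_h agree2] | [h m'_h agree2]].
  have [m1 [g1 [e_m1 te_m1 m1_g1 lt_d]]] := quad_move m_g m_h agree2.
  rewrite def_d in lt_d.
  have [k [r [r' [e_r e_r' te_r te_rr']]]] :=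
    IH _ lt_d m1 m' g1 v erefl (etrans te_m1 eq_e) m1_g1 m'_v.
  exists k, r, r'; split=> //; first exact: quad_equiv_trans e_r.
  exact: etrans te_m1.
have [m1 [v1 [e_m1 te_m1 m1_v1 lt_d]]] := quad_move m'_v m'_h agree2.
rewrite [qdist v g]qdistC def_d qdistC in lt_d.
have [k [r [r' [e_r e_r' te_r te_rr']]]] :=
  IH _ lt_d m m1 g v1 erefl (etrans eq_e (esym te_m1)) m_g m1_v1.
by exists k, r, r'; split=> //; apply: quad_equiv_trans e_r'.
Qed.

Lemma quad_equiv_fiber (m m' : 'X_{1..K}) : toric_exp m = toric_exp m' -> quad_equiv m m'.
Proof.
move def_d: (mdeg m) => d.
elim/ltn_ind: d m m' def_d => d IH m m' def_d eq_e.
have [m0 | m_neq0] := eqVneq m 0%MM.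
  rewrite m0 in eq_e *; have /eqP -> : m' == 0%MM.
    by rewrite -mdeg_eq0 -(toric_exp_mdeg eq_e) mdeg0.
  exact: quad_equiv_refl.
have [g m_g] := mnm_supp m_neq0.
have [v m'_v] : exists v, (0 < m' v)%N.
  apply: mnm_supp; apply: contra m_neq0 => /eqP m'0.
  by rewrite -mdeg_eq0 (toric_exp_mdeg eq_e) m'0 mdeg0.
have [h [r [r' [e_r e_r' te_r te_rr']]]] := quad_equiv_common_factor eq_e m_g m'_v.
apply: (quad_equiv_trans e_r); apply: (quad_equiv_trans _ (quad_equiv_sym e_r')).
apply/quad_equivDl/(IH (mdeg r)) => //.
by rewrite -def_d -(toric_exp_mdeg te_r) mdegD mdeg1.
Qed.

End QuadraticMoves.

Theorem theorem5p2 (R : realType) (n : nat) :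
  (3 <= n)%N -> toric_ideal_generated_by_deg2_binomials R 'Z_2 n.
Proof.
move=> _; exists (deg2_kernel_binomials R n); split.
  move=> b /mapP[[[[a a'] c] c'] + ->]; rewrite mem_filter /= => /andP[/eqP eq_e _].
  split; first by exists (U_(a) + U_(a'))%MM, (U_(c) + U_(c'))%MM; rewrite !mdegD !mdeg1.
  by rewrite /in_toric_ideal toric_mapB !toric_mapX eq_e subrr.
move=> p; rewrite /in_toric_ideal toric_mapE => ker_p.
have [c ->] := in_ideal_monomial_map_kernel (@quad_equiv_fiber R n) ker_p.
exists [seq c i | i <- enum 'I_(size (deg2_kernel_binomials R n))].
rewrite size_map size_enum_ord; split=> //; apply: eq_bigr => i _.
by rewrite (nth_map i) ?size_enum_ord // nth_ord_enum.
Qed.
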